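(* Let $q$ be a prime power and $1\leqslant s\leqslant q-1$. In the polynomial ring $\mathbb{F}_q[x_1,x_2,y_1,y_2]$ (or its fraction field) the following two identities hold: $$h_{s}\cdot (d_{2}^{*})^{s}=c_{1}^{*}\cdot u_{1}^{s}+u_{-1}^{q-s}\cdot u_{0}\cdot\sum_{i=1}^s (-1)^i\binom{s}{i} (u_{-1} u_{1})^{s-i}(u_{0}^{q+1})^{i-1},$$ $$h_{q-1-s}\cdot d_{2}^{s}=c_{1}\cdot u_{-1}^{s}+u_{0}\cdot u_{1}^{q-s}\cdot\sum_{i=1}^s (-1)^i\binom{s}{i} (u_{-1} u_{1})^{s-i}(u_{0}^{q+1})^{i-1}.$$
   Context: $\mathbb{F}_q$ is the finite field with $q=p^m$ elements. In $\mathbb{F}_q[x_1,x_2,y_1,y_2]$ let $*$ be the $\mathbb{F}_q$-algebra involution with $x_1\mapsto y_2$, $x_2\mapsto y_1$, $y_1\mapsto x_2$, $y_2\mapsto x_1$; write $f^*$ for the image of $f$. Define $d_2:=x_1x_2^q-x_2x_1^q$, $d_1:=x_1x_2^{q^2}-x_2x_1^{q^2}$, $c_0:=d_2^{q-1}$, $c_1:=d_1/d_2$ (a polynomial), and $c_0^*,c_1^*,d_2^*$ their images under $*$. Define $u_0:=x_1y_1+x_2y_2$, $u_1:=x_1^qy_1+x_2^qy_2$, $u_{-1}:=x_1y_1^q+x_2y_2^q$. For $0\leqslant s\leqslant q-1$ define $$h_s:=\frac{u_1^{s+1}(d_2^* )^{q-1-s}+u_{-1}^{q-s}d_2^{s}}{u_0^{q}}.$$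 (One has $h_0=c_1^*$, $h_{q-1}=c_1$, $h_s^*=h_{q-1-s}$.) *)

From HB Require Import structures.
From mathcomp Require Import all_boot all_order all_algebra all_field.
From mathcomp Require Import mpoly fraction.
Set Implicit Arguments. Unset Strict Implicit. Unset Printing Implicit Defensive.
Import GRing.Theory.
Local Open Scope ring_scope.

(* Polynomial ring F_q[x1,x2,y1,y2] = {mpoly F[4]} with variables
   x1 = 'X_0, x2 = 'X_1, y1 = 'X_2, y2 = 'X_3; q := #|F|.
   All quantities are computed in the fraction field {fraction {mpoly F[4]}}. *)
Section Defs.
Variable F : finFieldType.

Definition P4 := {mpoly F[4]}.
Definition K4 := {fraction P4}.

Definition qq : nat := #|F|.

Definition vX1 : P4 := 'X_(0 : 'I_4).
Definition vX2 : P4 := 'X_(1 : 'I_4).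
Definition vY1 : P4 := 'X_(2 : 'I_4).
Definition vY2 : P4 := 'X_(3 : 'I_4).

Definition star (f : P4) : P4 := f \mPo [tuple vY2; vY1; vX2; vX1].

Definition emb (f : P4) : K4 := tofrac f.

Definition d2p : P4 := vX1 * vX2 ^+ qq - vX2 * vX1 ^+ qq.
Definition d1p : P4 := vX1 * vX2 ^+ (qq ^ 2) - vX2 * vX1 ^+ (qq ^ 2).

Definition d2 : K4 := emb d2p.
Definition d1 : K4 := emb d1p.
Definition c0 : K4 := d2 ^+ (qq - 1).
Definition c1 : K4 := d1 / d2.
Definition d2s : K4 := emb (star d2p).
Definition c0s : K4 := emb (star (d2p ^+ (qq - 1))).
Definition c1s : K4 := emb (star d1p) / emb (star d2p).

Definition u0 : K4 := emb (vX1 * vY1 + vX2 * vY2).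
Definition u1 : K4 := emb (vX1 ^+ qq * vY1 + vX2 ^+ qq * vY2).
Definition um1 : K4 := emb (vX1 * vY1 ^+ qq + vX2 * vY2 ^+ qq).

Definition h (s : nat) : K4 :=
  (u1 ^+ s.+1 * d2s ^+ (qq - 1 - s) + um1 ^+ (qq - s) * d2 ^+ s) / u0 ^+ qq.

Definition Ssum (s : nat) : K4 :=
  \sum_(1 <= i < s.+1) (-1) ^+ i * 'C(s, i)%:R
     * (um1 * u1) ^+ (s - i) * (u0 ^+ qq.+1) ^+ (i - 1).
End Defs.

(* Both identities are consequences of three polynomial relations valid in
   any commutative ring of characteristic p, where q is a power of p and
   u_0, u_1, u_{-1}, d_2, d_2^*, d_1, d_1^* are the usual expressions in
   x_1, x_2, y_1, y_2 :
     (M)   u_1 (d_2^* )^q + u_{-1}^q d_2^*  = d_1^* u_0^q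
     (M')  u_{-1} d_2^q  + u_1^q d_2       = d_1   u_0^q
     (P)   d_2 d_2^*  = u_{-1} u_1 - u_0^(q+1).
   (M) and (M') follow from additivity of the Frobenius map x |-> x^q.
   By the binomial theorem, (P) gives (d_2 d_2^* )^s = (u_{-1}u_1)^s
   + u_0^(q+1) S_s, where S_s is the alternating binomial sum of the
   statement.  A purely field-theoretic computation (h_identity) turns
   (M) and (P) into the first identity; the second identity is the image of
   the first under the involution *, which swaps (u_1, d_2^*, d_1^* ) with
   (u_{-1}, d_2, d_1), so the same abstract lemma applies to it. *)

From HB Require Import structures.
From mathcomp Require Import all_boot all_order all_algebra all_field.
From mathcomp Require Import mpoly fraction.
From mathcomp Require abelian.
From mathcomp Require Import ring zify.
Import GRing.Theory.
Local Open Scope ring_scope.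

(* The tail of the binomial expansion of (x - y)^s, divided by y;
   Ssum s is binom_tail (u_{-1} u_1) (u_0^(q+1)) s. *)
Definition binom_tail {R : comNzRingType} (x y : R) (s : nat) : R :=
  \sum_(1 <= i < s.+1) (-1) ^+ i * 'C(s, i)%:R * x ^+ (s - i) * y ^+ (i - 1).

Lemma binom_tailE (R : comNzRingType) (x y : R) (s : nat) :
  y * binom_tail x y s = (x - y) ^+ s - x ^+ s.
Proof.
rewrite /binom_tail exprBn big_ord_recl /= subn0 bin0 expr0 !mul1r mulr1 mulr1n.
rewrite [x ^+ s + _]addrC addrK big_add1 big_mkord mulr_sumr.
apply: eq_bigr => i _; rewrite /bump /= add1n subSS subn0 -[RHS]mulr_natr !exprS.
ring.
Qed.

(* The abstract form of the first identity: only the Moore-type relation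
   (M) and the product relation (P) are used, together with u_0, d_2^* != 0.
   Here U, V, D, E, G play the roles of u_1, u_{-1}, d_2, d_2^*, d_1^*. *)
Lemma h_identity (K : fieldType) (q s : nat) (U0 U V D E G : K) :
  (s < q)%N -> U0 != 0 -> E != 0 ->
  U * E ^+ q + V ^+ q * E = G * U0 ^+ q ->
  D * E = V * U - U0 ^+ q.+1 ->
  (U ^+ s.+1 * E ^+ (q - 1 - s) + V ^+ (q - s) * D ^+ s) / U0 ^+ q * E ^+ s
    = G / E * U ^+ s + V ^+ (q - s) * U0 * binom_tail (V * U) (U0 ^+ q.+1) s.
Proof.
move=> lt_sq nzU0 nzE moore prod.
have nzU0q : U0 ^+ q != 0 by exact: expf_neq0.
have nzU0q1 : U0 ^+ q.+1 != 0 by exact: expf_neq0.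
have -> : G = (U * E ^+ q + V ^+ q * E) / U0 ^+ q by rewrite moore mulfK.
have -> : binom_tail (V * U) (U0 ^+ q.+1) s
          = ((D * E) ^+ s - (V * U) ^+ s) / U0 ^+ q.+1.
  by rewrite prod -binom_tailE [_ * binom_tail _ _ _]mulrC mulfK.
have [k ->] : exists k, q = (s + k).+1 by exists (q - 1 - s)%N; lia.
have -> : ((s + k).+1 - 1 - s = k)%N by lia.
have -> : ((s + k).+1 - s = k.+1)%N by lia.
rewrite !exprS !exprD !exprMn.
by field; rewrite nzU0 nzE !expf_neq0.
Qed.

Section FrobeniusRelations.
Context {R : comNzRingType} {q : nat} {a b c d : R}.
Hypothesis q_pchar : [pchar R].-nat q.

Lemma frobD (x y : R) : (x + y) ^+ q = x ^+ q + y ^+ q.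
Proof. exact: exprDn_pchar. Qed.

Lemma frobB (x y : R) : (x - y) ^+ q = x ^+ q - y ^+ q.
Proof. by rewrite frobD exprNn_pchar. Qed.

Lemma moore_star :
  (a ^+ q * c + b ^+ q * d) * (d * c ^+ q - c * d ^+ q) ^+ q
    + (a * c ^+ q + b * d ^+ q) ^+ q * (d * c ^+ q - c * d ^+ q)
  = (d * c ^+ (q ^ 2) - c * d ^+ (q ^ 2)) * (a * c + b * d) ^+ q.
Proof. by rewrite frobB !frobD !exprMn -!exprM mulnn; ring. Qed.

Lemma moore :
  (a * c ^+ q + b * d ^+ q) * (a * b ^+ q - b * a ^+ q) ^+ q
    + (a ^+ q * c + b ^+ q * d) ^+ q * (a * b ^+ q - b * a ^+ q)
  = (a * b ^+ (q ^ 2) - b * a ^+ (q ^ 2)) * (a * c + b * d) ^+ q.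
Proof. by rewrite frobB !frobD !exprMn -!exprM mulnn; ring. Qed.

Lemma d2_d2s_product :
  (a * b ^+ q - b * a ^+ q) * (d * c ^+ q - c * d ^+ q)
  = (a * c ^+ q + b * d ^+ q) * (a ^+ q * c + b ^+ q * d)
    - (a * c + b * d) ^+ q.+1.
Proof. by rewrite exprS frobD !exprMn; ring. Qed.

End FrobeniusRelations.

(* Nonvanishing of the relevant polynomials, by looking at one coefficient. *)
Section NonZero.
Variables (n : nat) (R : comNzRingType).

Lemma mpoly_binom_neq0 (i j : 'I_n) (q : nat) : i != j -> (1 < q)%N ->
  ('X_i * 'X_j ^+ q - 'X_j * 'X_i ^+ q : {mpoly R[n]}) != 0.
Proof.
move=> ij q_gt1; rewrite !mpolyXn -!mpolyXD; apply/eqP.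
move=> /(congr1 (mcoeff (U_(i) + U_(j) *+ q)%MM)).
rewrite mcoeffB !mcoeffX eqxx mcoeff0.
have -> : ((U_(j) + U_(i) *+ q)%MM == (U_(i) + U_(j) *+ q)%MM) = false.
  apply/negbTE/eqP => /mnmP /(_ i); rewrite !mnmDE !mulmnE !mnm1E eqxx /=.
  by rewrite (eq_sym j i) (negbTE ij) /=; lia.
by rewrite subr0; apply/eqP; exact: oner_neq0.
Qed.

Lemma mpoly_sum2_neq0 (i j k l : 'I_n) : i != j -> i != k -> i != l ->
  ('X_i * 'X_j + 'X_k * 'X_l : {mpoly R[n]}) != 0.
Proof.
move=> ij ik il; rewrite -!mpolyXD; apply/eqP.
move=> /(congr1 (mcoeff (U_(i) + U_(j))%MM)).
rewrite mcoeffD !mcoeffX eqxx mcoeff0.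
have -> : ((U_(k) + U_(l))%MM == (U_(i) + U_(j))%MM) = false.
  apply/negbTE/eqP => /mnmP /(_ i); rewrite !mnmDE !mnm1E eqxx.
  by rewrite (eq_sym k i) (eq_sym l i) (eq_sym j i) (negbTE ij) (negbTE ik) (negbTE il).
by rewrite addr0; apply/eqP; exact: oner_neq0.
Qed.

End NonZero.

Section Concrete.
Variable F : finFieldType.
Local Notation q := (qq F).
Local Notation a := (emb (vX1 F)).
Local Notation b := (emb (vX2 F)).
Local Notation c := (emb (vY1 F)).
Local Notation d := (emb (vY2 F)).

Lemma qq_pchar : [pchar K4 F].-nat q.
Proof.
have [p p_prime pF] := finPcharP F.
have pP : p \in [pchar P4 F] by exact: (rmorph_pchar (@mpolyC 4 F) pF).
have pK : p \in [pchar K4 F] by exact: (rmorph_pchar (@tofrac (P4 F)) pP).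
rewrite (eq_pnat _ (pcharf_eq pK)) /qq -cardsT.
exact: abelian.abelem_pgroup (abelian.fin_ring_pchar_abelem pF).
Qed.

Lemma star_d2p : star (d2p F) = vY2 F * vY1 F ^+ q - vY1 F * vY2 F ^+ q.
Proof. by rewrite /star /d2p !rmorphB !rmorphM !rmorphXn /= !comp_mpolyXU. Qed.

Lemma star_d1p :
  star (d1p F) = vY2 F * vY1 F ^+ (q ^ 2) - vY1 F * vY2 F ^+ (q ^ 2).
Proof. by rewrite /star /d1p !rmorphB !rmorphM !rmorphXn /= !comp_mpolyXU. Qed.

Lemma u0E : u0 F = a * c + b * d.
Proof. by rewrite /u0 /emb rmorphD !rmorphM. Qed.

Lemma u1E : u1 F = a ^+ q * c + b ^+ q * d.
Proof. by rewrite /u1 /emb rmorphD !rmorphM !rmorphXn. Qed.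

Lemma um1E : um1 F = a * c ^+ q + b * d ^+ q.
Proof. by rewrite /um1 /emb rmorphD !rmorphM !rmorphXn. Qed.

Lemma d2E : d2 F = a * b ^+ q - b * a ^+ q.
Proof. by rewrite /d2 /d2p /emb rmorphB !rmorphM !rmorphXn. Qed.

Lemma d1E : d1 F = a * b ^+ (q ^ 2) - b * a ^+ (q ^ 2).
Proof. by rewrite /d1 /d1p /emb rmorphB !rmorphM !rmorphXn. Qed.

Lemma d2sE : d2s F = d * c ^+ q - c * d ^+ q.
Proof. by rewrite /d2s star_d2p /emb rmorphB !rmorphM !rmorphXn. Qed.

Lemma d1sE : emb (star (d1p F)) = d * c ^+ (q ^ 2) - c * d ^+ (q ^ 2).
Proof. by rewrite star_d1p /emb rmorphB !rmorphM !rmorphXn. Qed.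

Lemma relation_M :
  u1 F * d2s F ^+ q + um1 F ^+ q * d2s F = emb (star (d1p F)) * u0 F ^+ q.
Proof. by rewrite u0E u1E um1E d2sE d1sE; exact: (moore_star qq_pchar). Qed.

Lemma relation_M' : um1 F * d2 F ^+ q + u1 F ^+ q * d2 F = d1 F * u0 F ^+ q.
Proof. by rewrite u0E u1E um1E d2E d1E; exact: (moore qq_pchar). Qed.

Lemma relation_P : d2 F * d2s F = um1 F * u1 F - u0 F ^+ q.+1.
Proof. by rewrite u0E u1E um1E d2E d2sE; exact: (d2_d2s_product qq_pchar). Qed.

Lemma u0_neq0 : u0 F != 0.
Proof. by rewrite /u0 /emb tofrac_eq0; exact: mpoly_sum2_neq0. Qed.

Lemma d2_neq0 : d2 F != 0.
Proof. by rewrite /d2 /emb tofrac_eq0; apply: mpoly_binom_neq0; rewrite ?finNzRing_gt1. Qed.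

Lemma d2s_neq0 : d2s F != 0.
Proof.
by rewrite /d2s /emb tofrac_eq0 star_d2p; apply: mpoly_binom_neq0; rewrite ?finNzRing_gt1.
Qed.

End Concrete.

Theorem lemma3p1 (F : finFieldType) (s : nat) :
  (1 <= s)%N -> (s <= qq F - 1)%N ->
  h F s * d2s F ^+ s
    = c1s F * u1 F ^+ s + um1 F ^+ (qq F - s) * u0 F * Ssum F s
  /\
  h F (qq F - 1 - s) * d2 F ^+ s
    = c1 F * um1 F ^+ s + u0 F * u1 F ^+ (qq F - s) * Ssum F s.
Proof.
move=> s_gt0 s_le; have q_gt1 : (1 < qq F)%N by exact: finNzRing_gt1.
have lt_sq : (s < qq F)%N by lia.
split.
-
  rewrite /c1s -/(d2s F) /h.
  by apply: h_identity; rewrite ?u0_neq0 ?d2s_neq0 ?relation_M ?relation_P.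
- (* its image under *, with U, V, D, E, G := u_{-1}, u_1, d_2^*, d_2, d_1 *)
  rewrite /h /c1.
  have -> : ((qq F - 1 - s).+1 = qq F - s)%N by lia.
  have -> : (qq F - 1 - (qq F - 1 - s) = s)%N by lia.
  have -> : (qq F - (qq F - 1 - s) = s.+1)%N by lia.
  rewrite addrC [u0 F * _]mulrC /Ssum -/(binom_tail _ _ s) [um1 F * u1 F]mulrC.
  apply: h_identity; rewrite ?u0_neq0 ?d2_neq0 ?relation_M' //.
  by rewrite mulrC relation_P mulrC.
Qed.
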